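(* Let $\varepsilon>0$ be fixed, $d$ a sufficiently large constant (depending on $\varepsilon$) and $q\ge(2+\varepsilon)d$. For integers $n\ge d$ and $L\ge1$, let $X\sim\mathrm{Bin}(n,d/n)$ and let $X_1,X_2,\dots$ be independent random variables where, for $i\le L$, $X_i$ is distributed as $X$, and for $i>L$, $X_i$ is distributed as $X\cdot\mathbf{1}[X\ge(q-5)/2]$. Let $Y_0=L$ and $Y_i=Y_{i-1}+X_i-1$ for $i\ge1$. Then there exist constants $C_1,C_2>0$ depending only on $d$ and $\varepsilon$ such that for all $n$, $L$ and $t\ge0$, $$\Pr[Y_t\ge0]\le\exp(-C_1t+C_2L).$$ *)

From Stdlib Require Import Reals ZArith Arith.
Open Scope R_scope.

Definition binom_pmf (n : nat) (p : R) (k : nat) : R :=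
  C n k * p ^ k * (1 - p) ^ (n - k).

Definition Xval (q L i x : nat) : nat :=
  if (i <=? L)%nat then x
  else if Rle_dec ((INR q - 5) / 2) (INR x) then x else 0%nat.

(* pr_walk n p q L k i y = Pr[ y + sum_{j=i}^{i+k-1} (X_j - 1) >= 0 ],
   the X_j independent, X_j = Xval q L j B_j with B_j ~ Bin(n,p) i.i.d.
   (the exact finite expectation over the product of discrete laws). *)
Fixpoint pr_walk (n : nat) (p : R) (q L : nat) (k i : nat) (y : Z) : R :=
  match k with
  | O => if (0 <=? y)%Z then 1 else 0
  | S k' => sum_f_R0 (fun x => binom_pmf n p x *
              pr_walk n p q L k' (S i) (y + Z.of_nat (Xval q L i x) - 1)%Z) n
  end.

Definition prob_Yt_nonneg (n : nat) (d : R) (q L t : nat) : R :=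
  pr_walk n (d / INR n) q L t 1 (Z.of_nat L).

(* For a tilt lam > 0, Markov's inequality gives
   Pr[Y_t >= 0] <= E[exp (lam Y_t)] = exp (lam L) * prod_i E[exp (lam (X_i - 1))].
   For i <= L the factor is at most the binomial moment generating function
   exp (d (e^lam - 1)).  For i > L, X_i is either 0, contributing e^-lam, or at
   least (q-5)/2 >= (1 + delta) d - 5/2 with delta = min(eps,1)/2; tilting this
   tail event by mu = delta/4 instead of lam = delta^2/32 bounds its contribution
   by e^-lam exp (1 - d delta^2/16), which is far below lam once d delta^4 > 512.
   So every late factor is at most a constant B < 1, and C1 = - ln B. *)

From Stdlib Require Import Reals ZArith Lra Lia.
Open Scope R_scope.

Lemma exp_le_exp x y : x <= y -> exp x <= exp y.
Proof. intros [Hlt | ->]; [now left; apply exp_increasing | apply Rle_refl]. Qed.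

Lemma one_le_exp x : 0 <= x -> 1 <= exp x.
Proof. intros Hx. pose proof (exp_ineq1_le x). lra. Qed.

Lemma exp_mul_INR a k : exp (a * INR k) = exp a ^ k.
Proof.
  rewrite <- Rpower_pow by apply exp_pos.
  unfold Rpower; rewrite ln_exp, Rmult_comm; reflexivity.
Qed.

Lemma exp_le_quadratic x : 0 <= x <= 1/2 -> exp x <= 1 + x + 2 * x ^ 2.
Proof.
  intros Hx.
  assert (Hinv : 1 - x <= / exp x) by (rewrite <- exp_Ropp; apply exp_ineq1_le).
  assert (Hpos := exp_pos x).
  assert (H1 : exp x * (1 - x) <= 1).
  { apply Rle_trans with (exp x * / exp x); [apply Rmult_le_compat_l; lra|].
    rewrite Rinv_r by lra. apply Rle_refl. }
  assert ((1 + x + 2 * x ^ 2) * (1 - x) >= 1) by nra.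
  nra.
Qed.

Lemma exp_opp_mul_one_add_lt x s : s < x -> exp (- x) * (1 + s) < 1.
Proof.
  intros Hsx.
  assert (Hx := exp_ineq1_le x).
  assert (Hinv : exp (- x) * exp x = 1) by (rewrite <- exp_plus, Rplus_opp_l; apply exp_0).
  assert (Hpos := exp_pos (- x)).
  nra.
Qed.

Lemma exp_opp_lt_of_mul_gt w x : 0 < x -> 1 < (1 + w) * x -> exp (- w) < x.
Proof.
  intros Hx Hwx.
  rewrite exp_Ropp.
  assert (Hw := exp_ineq1_le w).
  assert (Hpos := exp_pos w).
  apply Rmult_lt_reg_l with (exp w); [exact Hpos|].
  rewrite Rinv_r by lra. nra.
Qed.

Lemma binom_pmf_ge0 n p k : 0 <= p <= 1 -> 0 <= binom_pmf n p k.
Proof.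
  intros Hp. unfold binom_pmf, C.
  repeat apply Rmult_le_pos; try apply pow_le; try apply pos_INR; try lra.
  left; apply Rinv_0_lt_compat, Rmult_lt_0_compat; apply INR_fact_lt_0.
Qed.

Lemma binom_mgf n p a :
  sum_f_R0 (fun x => binom_pmf n p x * exp (a * INR x)) n = (p * exp a + (1 - p)) ^ n.
Proof.
  rewrite binomial. apply sum_eq; intros i _.
  unfold binom_pmf. rewrite exp_mul_INR, Rpow_mult_distr. ring.
Qed.

Lemma binom_pmf_sum n p : sum_f_R0 (binom_pmf n p) n = 1.
Proof.
  transitivity (sum_f_R0 (fun x => binom_pmf n p x * exp (0 * INR x)) n).
  - apply sum_eq; intros i _. rewrite Rmult_0_l, exp_0, Rmult_1_r. reflexivity.
  - rewrite binom_mgf, exp_0. replace (p * 1 + (1 - p)) with 1 by ring. apply pow1.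
Qed.

Lemma binom_mgf_le n p a : 0 <= p <= 1 ->
  (p * exp a + (1 - p)) ^ n <= exp (INR n * p * (exp a - 1)).
Proof.
  intros Hp.
  assert (H1 : p * exp a + (1 - p) <= exp (p * (exp a - 1))).
  { pose proof (exp_ineq1_le (p * (exp a - 1))). lra. }
  assert (H0 : 0 <= p * exp a + (1 - p)) by (pose proof (exp_pos a); nra).
  eapply Rle_trans; [apply pow_incr; split; eassumption|].
  rewrite <- exp_mul_INR. apply exp_le_exp. lra.
Qed.

Section Walk.

Variables (n : nat) (p : R) (q L : nat) (lam : R).
Hypothesis Hp : 0 <= p <= 1.
Hypothesis Hlam : 0 <= lam.

Definition step_mgf (i : nat) : R :=
  sum_f_R0 (fun x => binom_pmf n p x * exp (lam * (INR (Xval q L i x) - 1))) n.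

Lemma pr_walk_O_le i y : pr_walk n p q L 0 i y <= exp (lam * IZR y).
Proof.
  simpl. pose proof (exp_pos (lam * IZR y)).
  destruct (Z.leb_spec 0 y) as [Hy | Hy]; [|lra].
  apply IZR_le in Hy.
  assert (0 <= lam * IZR y) by (apply Rmult_le_pos; lra).
  pose proof (exp_ineq1_le (lam * IZR y)). lra.
Qed.

Lemma pr_walk_S_le k i y c :
  (forall z, pr_walk n p q L k (S i) z <= c * exp (lam * IZR z)) ->
  pr_walk n p q L (S k) i y <= c * exp (lam * IZR y) * step_mgf i.
Proof.
  intros Hk. simpl. unfold step_mgf. rewrite scal_sum.
  apply sum_Rle; intros x _.
  eapply Rle_trans.
  { apply Rmult_le_compat_l; [apply binom_pmf_ge0, Hp | apply Hk]. }
  rewrite minus_IZR, plus_IZR, <- INR_IZR_INZ.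
  replace (lam * (IZR y + INR (Xval q L i x) - 1))
    with (lam * IZR y + lam * (INR (Xval q L i x) - 1)) by ring.
  rewrite exp_plus. right; ring.
Qed.

(* [L + 1 - i] (truncated) counts the steps j >= i with j <= L. *)
Lemma pr_walk_le B K :
  0 <= B -> 1 <= K ->
  (forall i, (i <= L)%nat -> step_mgf i <= B * K) ->
  (forall i, (L < i)%nat -> step_mgf i <= B) ->
  forall k i y, pr_walk n p q L k i y <= exp (lam * IZR y) * B ^ k * K ^ (L + 1 - i).
Proof.
  intros HB HK Hearly Hlate k.
  induction k as [|k IHk]; intros i y.
  - eapply Rle_trans; [apply pr_walk_O_le|].
    pose proof (exp_pos (lam * IZR y)). pose proof (pow_R1_Rle K (L + 1 - i) HK).
    rewrite pow_O, Rmult_1_r. nra.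
  - assert (Hc : 0 <= B ^ k * K ^ (L + 1 - S i) * exp (lam * IZR y)).
    { pose proof (pow_le B k HB). pose proof (pow_R1_Rle K (L + 1 - S i) HK).
      pose proof (exp_pos (lam * IZR y)). repeat apply Rmult_le_pos; lra. }
    eapply Rle_trans.
    { apply (pr_walk_S_le k i y (B ^ k * K ^ (L + 1 - S i))).
      intros z. rewrite (Rmult_comm (B ^ k * _)), <- Rmult_assoc. apply IHk. }
    destruct (le_lt_dec i L) as [Hi | Hi].
    + replace (L + 1 - i)%nat with (S (L + 1 - S i)) by lia.
      apply Rle_trans with (B ^ k * K ^ (L + 1 - S i) * exp (lam * IZR y) * (B * K));
        [apply Rmult_le_compat_l; auto | simpl; right; ring].
    + replace (L + 1 - i)%nat with (L + 1 - S i)%nat by lia.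
      apply Rle_trans with (B ^ k * K ^ (L + 1 - S i) * exp (lam * IZR y) * B);
        [apply Rmult_le_compat_l; auto | simpl; right; ring].
Qed.

Lemma pr_walk_start_le A B t :
  0 < B <= A ->
  (forall i, (i <= L)%nat -> step_mgf i <= A) ->
  (forall i, (L < i)%nat -> step_mgf i <= B) ->
  pr_walk n p q L t 1 (Z.of_nat L) <= exp (ln B * INR t + (lam + ln A - ln B) * INR L).
Proof.
  intros HBA Hearly Hlate.
  assert (HBK : B * exp (ln A - ln B) = A).
  { unfold Rminus. rewrite exp_plus, exp_Ropp, !exp_ln by lra. field; lra. }
  assert (HK : 1 <= exp (ln A - ln B)).
  { apply one_le_exp.
    destruct (proj2 HBA) as [HA | <-]; [apply Rlt_le, Rlt_0_minus, ln_increasing|]; lra. }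
  eapply Rle_trans.
  { apply (pr_walk_le B (exp (ln A - ln B))); [lra | exact HK | |exact Hlate].
    intros i Hi. rewrite HBK. auto. }
  replace (L + 1 - 1)%nat with L by lia.
  rewrite <- INR_IZR_INZ, <- (exp_ln B) at 1 by lra.
  rewrite <- !exp_mul_INR, <- !exp_plus. right; f_equal; ring.
Qed.

Lemma step_mgf_early_le i : (i <= L)%nat -> step_mgf i <= exp (INR n * p * (exp lam - 1)).
Proof.
  intros Hi. unfold step_mgf.
  apply Rle_trans with (sum_f_R0 (fun x => binom_pmf n p x * exp (lam * INR x)) n).
  - apply sum_Rle; intros x _. unfold Xval.
    replace (i <=? L)%nat with true by (symmetry; apply Nat.leb_le; lia).
    apply Rmult_le_compat_l; [apply binom_pmf_ge0, Hp|]. apply exp_le_exp. nra.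
  - rewrite binom_mgf. apply binom_mgf_le, Hp.
Qed.

(* On {x >= thr}, exp (lam (x - 1)) <= exp (mu x - lam - (mu - lam) thr), whose
   expectation is controlled by the moment generating function at mu. *)
Lemma step_mgf_late_le mu i : lam <= mu -> (L < i)%nat ->
  step_mgf i <= exp (- lam) *
    (1 + exp (INR n * p * (exp mu - 1) - (mu - lam) * ((INR q - 5) / 2))).
Proof.
  intros Hmu Hi. unfold step_mgf.
  set (thr := (INR q - 5) / 2).
  set (c := exp (- lam - (mu - lam) * thr)).
  assert (Hc : 0 < c) by apply exp_pos.
  apply Rle_trans with
    (sum_f_R0 (fun x => binom_pmf n p x * exp (- lam) + binom_pmf n p x * exp (mu * INR x) * c) n).
  - apply sum_Rle; intros x _.
    pose proof (binom_pmf_ge0 n p x Hp). pose proof (exp_pos (- lam)).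
    pose proof (exp_pos (mu * INR x)).
    unfold Xval; fold thr.
    replace (i <=? L)%nat with false by (symmetry; apply Nat.leb_gt; lia).
    assert (0 <= binom_pmf n p x * exp (- lam)) by (apply Rmult_le_pos; lra).
    assert (0 <= binom_pmf n p x * exp (mu * INR x) * c)
      by (apply Rmult_le_pos; [apply Rmult_le_pos|]; lra).
    destruct (Rle_dec thr (INR x)) as [Hx | Hx].
    + assert (exp (lam * (INR x - 1)) <= c * exp (mu * INR x)).
      { unfold c. rewrite <- exp_plus. apply exp_le_exp. nra. }
      replace (binom_pmf n p x * exp (mu * INR x) * c)
        with (binom_pmf n p x * (c * exp (mu * INR x))) by ring.
      assert (binom_pmf n p x * exp (lam * (INR x - 1))
                <= binom_pmf n p x * (c * exp (mu * INR x))) by (apply Rmult_le_compat_l; lra).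
      lra.
    + simpl INR. replace (lam * (0 - 1)) with (- lam) by ring. lra.
  - rewrite plus_sum, <- !scal_sum, binom_pmf_sum, binom_mgf.
    apply Rle_trans with (exp (- lam) * 1 + c * exp (INR n * p * (exp mu - 1))).
    { apply Rplus_le_compat_l, Rmult_le_compat_l; [lra | apply binom_mgf_le, Hp]. }
    unfold c. rewrite <- exp_plus, Rmult_plus_distr_l, <- exp_plus.
    right; f_equal; f_equal; ring.
Qed.

End Walk.

Lemma late_exponent_le delta d thr :
  0 < delta <= 1/2 -> 0 <= d -> (1 + delta) * d - 5/2 <= thr ->
  d * (exp (delta / 4) - 1) - (delta / 4 - delta ^ 2 / 32) * thr <= 1 - d * delta ^ 2 / 16.
Proof.
  intros Hdelta Hd Hthr.
  assert (Hexp := exp_le_quadratic (delta / 4) ltac:(lra)).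
  assert (Hgap : 0 <= delta / 4 - delta ^ 2 / 32) by nra.
  assert (d * (exp (delta / 4) - 1) <= d * (delta / 4 + 2 * (delta / 4) ^ 2)) by nra.
  assert ((delta / 4 - delta ^ 2 / 32) * ((1 + delta) * d - 5/2)
          <= (delta / 4 - delta ^ 2 / 32) * thr) by nra.
  assert (0 <= d * delta ^ 2 * (1/2 - delta)) by (apply Rmult_le_pos; nra).
  nra.
Qed.

Definition late_rate (delta d : R) : R :=
  exp (- (delta ^ 2 / 32)) * (1 + exp (1 - d * delta ^ 2 / 16)).

Section Constants.

Variables delta d : R.
Hypothesis Hdelta : 0 < delta <= 1/2.
Hypothesis Hlarge : 512 < d * delta ^ 4.

Lemma large_d_pos : 0 < d.
Proof. assert (0 < delta ^ 4) by (apply pow_lt; lra). nra. Qed.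

Lemma late_rate_pos : 0 < late_rate delta d.
Proof.
  apply Rmult_lt_0_compat; [apply exp_pos|].
  pose proof (exp_pos (1 - d * delta ^ 2 / 16)). lra.
Qed.

(* exp (1 - d delta^2/16) < 1 / (d delta^2/16) < delta^2/32. *)
Lemma late_rate_lt_1 : late_rate delta d < 1.
Proof.
  apply exp_opp_mul_one_add_lt.
  replace (1 - d * delta ^ 2 / 16) with (- (d * delta ^ 2 / 16 - 1)) by ring.
  apply exp_opp_lt_of_mul_gt; [nra|].
  replace ((1 + (d * delta ^ 2 / 16 - 1)) * (delta ^ 2 / 32)) with (d * delta ^ 4 / 512) by field.
  lra.
Qed.

Lemma prob_Yt_nonneg_le q n L t :
  INR q >= (2 + 2 * delta) * d -> INR n >= d ->
  prob_Yt_nonneg n d q L t <= exp (ln (late_rate delta d) * INR t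
    + (delta ^ 2 / 32 + d * (exp (delta ^ 2 / 32) - 1) - ln (late_rate delta d)) * INR L).
Proof.
  intros Hq Hn.
  pose proof large_d_pos as Hd. pose proof late_rate_pos. pose proof late_rate_lt_1.
  assert (Hlam : 0 <= delta ^ 2 / 32) by nra.
  unfold prob_Yt_nonneg. set (p := d / INR n).
  assert (Hnp : INR n * p = d) by (unfold p; field; lra).
  assert (Hp : 0 <= p <= 1).
  { assert (0 < p) by (unfold p; apply Rdiv_lt_0_compat; lra). nra. }
  rewrite <- (ln_exp (d * (exp (delta ^ 2 / 32) - 1))).
  apply pr_walk_start_le; [exact Hp | exact Hlam | | |].
  - split; [lra|]. apply Rle_trans with 1; [lra|].
    apply one_le_exp, Rmult_le_pos; [lra|]. pose proof (one_le_exp (delta ^ 2 / 32) Hlam). lra.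
  - intros i Hi. rewrite <- Hnp. apply step_mgf_early_le; assumption.
  - intros i Hi.
    eapply Rle_trans; [apply (step_mgf_late_le _ _ _ _ _ Hp (delta / 4) i); [nra | exact Hi]|].
    apply Rmult_le_compat_l; [apply Rlt_le, exp_pos|].
    apply Rplus_le_compat_l, exp_le_exp. rewrite Hnp.
    apply late_exponent_le; [lra | lra | nra].
Qed.

End Constants.

Theorem mainTheorem16 :
  forall eps : R, eps > 0 ->
  exists d0 : R, forall d : R, d >= d0 ->
  exists C1 C2 : R, C1 > 0 /\ C2 > 0 /\
  forall q : nat, INR q >= (2 + eps) * d ->
  forall n L t : nat, INR n >= d -> (L >= 1)%nat ->
    prob_Yt_nonneg n d q L t <= exp (- C1 * INR t + C2 * INR L).
Proof.
  intros eps Heps.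
  set (delta := Rmin eps 1 / 2).
  assert (Hdelta_eps : 0 < delta <= 1/2 /\ 2 * delta <= eps).
  { unfold delta. pose proof (Rmin_l eps 1). pose proof (Rmin_r eps 1).
    pose proof (Rmin_pos eps 1 Heps Rlt_0_1). lra. }
  destruct Hdelta_eps as [Hdelta Heps_delta].
  assert (Hdelta4 : 0 < delta ^ 4) by (apply pow_lt; lra).
  exists (512 / delta ^ 4 + 1). intros d Hd.
  assert (Hlarge : 512 < d * delta ^ 4).
  { assert (512 / delta ^ 4 * delta ^ 4 = 512) by (field; lra). nra. }
  pose proof (large_d_pos delta d Hdelta Hlarge) as Hd0.
  assert (Hln : ln (late_rate delta d) < 0).
  { rewrite <- ln_1.
    apply ln_increasing; [apply late_rate_pos | apply late_rate_lt_1]; assumption. }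
  assert (Hexp : 0 < exp (delta ^ 2 / 32) - 1).
  { apply Rlt_0_minus. rewrite <- exp_0. apply exp_increasing. nra. }
  exists (- ln (late_rate delta d)),
    (delta ^ 2 / 32 + d * (exp (delta ^ 2 / 32) - 1) - ln (late_rate delta d)).
  split; [lra|]. split; [nra|].
  intros q Hq n L t Hn _.
  eapply Rle_trans; [apply prob_Yt_nonneg_le; [exact Hdelta | exact Hlarge | nra | exact Hn]|].
  right; f_equal; ring.
Qed.
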